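(* Let $\alpha,\beta\in\mathbb{C}$ with $\Re(\alpha)>-1$ and $\Re(\beta)>-1$, and let $n\geq 1$ be an integer. Then for all $z,w\in\mathbb{C}$ with $|z|<1$, $|w|<1$ and $w\notin(-1,0]$, $$\frac{\partial }{\partial z} P_{n}^{(\alpha ,\beta )} (z,w)+ \sqrt{w}\, \frac{\partial }{\partial w} P_{n}^{(\alpha ,\beta )} (z,w)-\frac{1+\alpha +\beta +n}{4}\, P_{n-1}^{(1+\alpha ,1+\beta )} (z,w)=0 .$$
   Context: For $\lambda\in\mathbb{C}$ and an integer $m\ge 0$, $(\lambda)_m$ denotes the Pochhammer symbol: $(\lambda)_0=1$ and $(\lambda)_m=\lambda(\lambda+1)\cdots(\lambda+m-1)$ for $m\ge1$. $\sqrt{w}$ denotes the principal branch of the square root. For $\alpha,\beta\in\mathbb{C}$ with $\Re(\alpha)>-1$, $\Re(\beta)>-1$ and an integer $n\ge 0$, the two-variable (complex bivariate) Jacobi polynomial is $$P_{n}^{(\alpha ,\beta )} (z,w)=\sum _{k=0}^{n} \frac{(1+\alpha)_{n}\, (1+\alpha +\beta)_{n+k}}{k!\,(n-k)!\,(1+\alpha)_{k}\, (1+\alpha +\beta)_{n} } \left(\frac{z-\sqrt{w} }{2} \right)^{k},$$ where the quotient $(1+\alpha+\beta)_{n+k}/(1+\alpha+\beta)_n$ is understood as $(1+\alpha+\beta+n)_k$. The symbol $P_{n-1}^{(1+\alpha ,1+\beta )}$ denotes the same polynomial with parameters $\alpha,\beta$ replaced by $1+\alpha,1+\beta$ and degree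 index $n-1$. *)

From Stdlib Require Import Reals Factorial.
From Coquelicot Require Import Coquelicot.
Open Scope R_scope.

Fixpoint Csum (f : nat -> C) (n : nat) : C :=
  match n with
  | O => f O
  | S m => Cplus (Csum f m) (f (S m))
  end.

Fixpoint Cpow (x : C) (m : nat) : C :=
  match m with
  | O => RtoC 1
  | S p => Cmult x (Cpow x p)
  end.

Fixpoint poch (l : C) (m : nat) : C :=
  match m with
  | O => RtoC 1
  | S p => Cmult (poch l p) (Cplus l (RtoC (INR p)))
  end.

(* Principal branch of the complex square root:
   sqrt w = sqrt((|w|+Re w)/2) + i s sqrt((|w|-Re w)/2), s = +1 if Im w >= 0, -1 otherwise.
   (Re sqrt w >= 0, and sqrt w = i sqrt|w| on the negative real axis.) *)
Definition Csqrt (w : C) : C :=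
  (sqrt ((Cmod w + Re w) / 2),
   (if Rle_dec 0 (Im w) then 1 else -1) * sqrt ((Cmod w - Re w) / 2)).

Definition jacobi2 (alpha beta : C) (n : nat) (z w : C) : C :=
  Csum (fun k =>
    Cmult
      (Cdiv (Cmult (poch (Cplus 1 alpha) n) (poch (Cplus (Cplus 1 alpha) beta + RtoC (INR n)) k))
            (Cmult (Cmult (RtoC (INR (fact k))) (RtoC (INR (fact (n - k)))))
                   (poch (Cplus 1 alpha) k)))
      (Cpow (Cdiv (Cminus z (Csqrt w)) 2) k)) n.

(* P_n^(alpha,beta)(z,w) is a polynomial p_n in u = (z - sqrt w)/2.  Since
   du/dz = 1/2 and du/dw = -1/(4 sqrt w), the operator d/dz + sqrt w d/dw acts
   as (1/4) d/du, and comparing coefficients (with (a)_(k+1) = a (a+1)_k) gives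
   p_(m+1)' = (1 + alpha + beta + m + 1) p_m^(1+alpha,1+beta).  The derivative of
   the principal square root, 1/(2 sqrt w), is obtained from
   sqrt v - sqrt w - (v - w)/(2 sqrt w) = -(sqrt v - sqrt w)^2/(2 sqrt w), which
   is quadratically small because |sqrt v + sqrt w| >= Re (sqrt w) > 0 off the cut. *)

From Stdlib Require Import Reals Factorial Lra Lia.
From Coquelicot Require Import Coquelicot.
Open Scope R_scope.

(* Coquelicot gives [C] two normed-module structures: [C_NormedModule], used by
   [is_derive] on [C -> C], and [AbsRing_NormedModule C_AbsRing], used by the
   generic product and chain rules. *)
Lemma is_derive_C_AbsRing_iff (f : C -> C) (x l : C) :
  @is_derive C_AbsRing C_NormedModule f x l <->
  @is_derive C_AbsRing (AbsRing_NormedModule C_AbsRing) f x l.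
Proof. split; intros [[] ?]; repeat split; assumption. Qed.

Lemma is_derive_eq (f : C -> C) (x l l' : C) :
  is_derive f x l -> l = l' -> is_derive f x l'.
Proof. intros H <-; exact H. Qed.

Lemma is_derive_Cid (x : C) : is_derive (fun y : C => y) x (RtoC 1).
Proof. apply is_derive_C_AbsRing_iff, (@is_derive_id C_AbsRing). Qed.

Lemma is_derive_Cmult (f g : C -> C) (x df dg : C) :
  is_derive f x df -> is_derive g x dg ->
  is_derive (fun y => f y * g y)%C x (df * g x + f x * dg)%C.
Proof.
  rewrite !is_derive_C_AbsRing_iff; intros Hf Hg.
  exact (is_derive_mult f g x df dg Hf Hg Cmult_comm).
Qed.

Lemma is_derive_Ccomp (f g : C -> C) (x df dg : C) :
  is_derive f (g x) df -> is_derive g x dg ->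
  is_derive (fun y => f (g y)) x (dg * df)%C.
Proof.
  rewrite (is_derive_C_AbsRing_iff g); intros Hf Hg.
  exact (is_derive_comp f g x df dg Hf Hg).
Qed.

Lemma is_derive_Cscal (a : C) (f : C -> C) (x df : C) :
  is_derive f x df -> is_derive (fun y => a * f y)%C x (a * df)%C.
Proof.
  intros Hf; eapply is_derive_eq.
  - exact (is_derive_Cmult _ f x _ df (is_derive_const a x) Hf).
  - change (0 * f x + a * df = a * df)%C; ring.
Qed.

Lemma is_derive_half_diff (f g : C -> C) (x df dg : C) :
  is_derive f x df -> is_derive g x dg ->
  is_derive (fun y => (f y - g y) / 2)%C x ((df - dg) / 2)%C.
Proof.
  intros Hf Hg; apply (is_derive_ext (fun y => / 2 * (f y - g y))%C).
  - intros y; apply Cmult_comm.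
  - eapply is_derive_eq.
    + exact (is_derive_Cscal (/ 2) _ x _ (is_derive_minus f g x df dg Hf Hg)).
    + apply Cmult_comm.
Qed.

Definition Cpoly (c : nat -> C) (n : nat) (u : C) : C :=
  Csum (fun k => c k * Cpow u k)%C n.

Lemma Cpoly_ext (c d : nat -> C) (n : nat) (u : C) :
  (forall k, c k = d k) -> Cpoly c n u = Cpoly d n u.
Proof.
  intros E; unfold Cpoly; induction n as [|n IH]; simpl; rewrite ?IH, !E; reflexivity.
Qed.

Lemma Cpoly_scal (a : C) (c : nat -> C) (n : nat) (u : C) :
  Cpoly (fun k => a * c k)%C n u = (a * Cpoly c n u)%C.
Proof. unfold Cpoly; induction n as [|n IH]; simpl; rewrite ?IH; ring. Qed.

Lemma is_derive_Cpow (k : nat) (u : C) :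
  is_derive (fun x => Cpow x (S k)) u (INR (S k) * Cpow u k)%C.
Proof.
  induction k as [|k IH].
  - eapply is_derive_ext; [intros x; simpl; symmetry; apply Cmult_1_r|].
    eapply is_derive_eq; [apply is_derive_Cid |].
    change (RtoC 1 = RtoC 1 * RtoC 1)%C; ring.
  - eapply is_derive_eq; [exact (is_derive_Cmult _ _ u _ _ (is_derive_Cid u) IH) |].
    rewrite (S_INR (S k)), RtoC_plus.
    change (1 * Cpow u (S k) + u * (INR (S k) * Cpow u k)
            = (INR (S k) + 1) * (u * Cpow u k))%C.
    simpl Cpow; ring.
Qed.

Lemma is_derive_Cpoly (c : nat -> C) (n : nat) (u : C) :
  is_derive (Cpoly c (S n)) u (Cpoly (fun k => INR (S k) * c (S k)) n u)%C.
Proof.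
  induction n as [|n IH].
  - eapply is_derive_eq.
    + apply (is_derive_plus (fun _ => c O * Cpow u 0)%C).
      * apply is_derive_const.
      * exact (is_derive_Cscal (c 1%nat) _ u _ (is_derive_Cpow 0 u)).
    + change (0 + c 1%nat * (INR 1 * Cpow u 0) = INR 1 * c 1%nat * Cpow u 0)%C; ring.
  - set (c' := fun k => (INR (S k) * c (S k))%C).
    eapply is_derive_eq.
    + exact (is_derive_plus _ _ u _ _ IH
               (is_derive_Cscal (c (S (S n))) _ u _ (is_derive_Cpow (S n) u))).
    + change (Cpoly c' n u + c (S (S n)) * (INR (S (S n)) * Cpow u (S n))
              = Cpoly c' n u + INR (S (S n)) * c (S (S n)) * Cpow u (S n))%C; ring.
Qed.

Lemma RtoC_neq0 (r : R) : r <> 0 -> RtoC r <> 0%C.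
Proof. intros Hr E; apply Hr; exact (f_equal Re E). Qed.

Lemma Csqrt_sq (w : C) : (Csqrt w * Csqrt w)%C = w.
Proof.
  destruct w as [x y]; unfold Csqrt; simpl Re; simpl Im.
  pose proof (re_le_Cmod (x, y)) as Hre; pose proof (Cmod2_alt (x, y)) as Hm2.
  simpl in Hre, Hm2; set (m := Cmod (x, y)) in *.
  apply Rabs_le_between in Hre.
  pose proof (sqrt_sqrt ((m + x) / 2) ltac:(lra)) as Ep.
  pose proof (sqrt_sqrt ((m - x) / 2) ltac:(lra)) as Em.
  assert (Epm : sqrt ((m + x) / 2) * sqrt ((m - x) / 2) = Rabs (y / 2)).
  { rewrite <- sqrt_mult, <- sqrt_Rsqr_abs by lra; f_equal; unfold Rsqr; nra. }
  unfold Cmult; simpl.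
  destruct (Rle_dec 0 y).
  - rewrite Rabs_pos_eq in Epm by lra; f_equal; nra.
  - rewrite Rabs_left in Epm by lra; f_equal; nra.
Qed.

Lemma Csqrt_re_pos (w : C) : ~ (Im w = 0 /\ Re w <= 0) -> 0 < Re (Csqrt w).
Proof.
  destruct w as [x y]; unfold Csqrt; simpl Re; simpl Im; intros Hcut.
  apply sqrt_lt_R0.
  pose proof (re_le_Cmod (x, y)) as Hre; pose proof (Cmod2_alt (x, y)) as Hm2.
  simpl in Hre, Hm2; set (m := Cmod (x, y)) in *.
  apply Rabs_le_between in Hre.
  destruct (Req_dec y 0) as [Hy | Hy].
  - assert (0 < x) by (destruct (Rle_dec x 0); [tauto | lra]); lra.
  - assert (m + x <> 0) by (intros E; apply Hy; nra); lra.
Qed.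

Lemma Csqrt_linear_approx (v w : C) : 0 < Re (Csqrt w) ->
  Cmod (Csqrt v - Csqrt w - (v - w) / (2 * Csqrt w))%C
    <= Cmod (v - w)%C ^ 2 / (2 * Re (Csqrt w) ^ 3).
Proof.
  set (s := Csqrt w); set (t := Csqrt v); set (r := Re s); intros Hr.
  assert (Hs0 : s <> 0%C) by (intros E; unfold r in Hr; rewrite E in Hr; simpl in Hr; lra).
  assert (Hs2 : (2 * s)%C <> 0%C) by (apply Cmult_neq_0; [apply RtoC_neq0; lra | exact Hs0]).
  assert (Eerr : (t - s - (v - w) / (2 * s) = - ((t - s) * (t - s)) / (2 * s))%C).
  { rewrite <- (Csqrt_sq v), <- (Csqrt_sq w); fold s t; field; exact Hs0. }
  assert (Edif : (v - w = (t - s) * (t + s))%C).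
  { rewrite <- (Csqrt_sq v), <- (Csqrt_sq w); fold s t; ring. }
  rewrite Eerr, Edif, Cmod_div by exact Hs2.
  rewrite Cmod_opp, !Cmod_mult, Cmod_R.
  set (D := Cmod (t - s)); set (T := Cmod (t + s)).
  assert (HD : 0 <= D) by apply Cmod_ge_0.
  assert (Hrs : r <= Cmod s).
  { pose proof (re_le_Cmod s) as H; apply Rabs_le_between in H; unfold r; lra. }
  assert (Hrt : r <= T).
  { pose proof (re_le_Cmod (t + s)%C) as H; apply Rabs_le_between in H.
    change (Re (t + s)%C) with (Re t + Re s) in H.
    pose proof (sqrt_pos ((Cmod v + Re v) / 2)) as Ht.
    change (0 <= Re t) in Ht; unfold T, r; lra. }
  rewrite Rabs_pos_eq by lra.
  apply Rle_trans with (D * D / (2 * r)).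
  - apply Rmult_le_compat_l; [nra |]; apply Rinv_le_contravar; lra.
  - replace (D * D / (2 * r)) with ((D * r) ^ 2 / (2 * r ^ 3)) by (field; lra).
    apply Rmult_le_compat_r;
      [left; apply Rinv_0_lt_compat, Rmult_lt_0_compat, pow_lt; lra |].
    apply pow_incr; nra.
Qed.

Lemma is_derive_Csqrt (w : C) : 0 < Re (Csqrt w) ->
  is_derive Csqrt w (/ (2 * Csqrt w))%C.
Proof.
  set (r := Re (Csqrt w)); intros Hr.
  split; [apply is_linear_scal_l |].
  intros x Hx.
  apply (@is_filter_lim_locally_unique _ (AbsRing_NormedModule C_AbsRing)) in Hx; subst x.
  intros eps; pose proof (cond_pos eps) as Heps.
  assert (Hdelta : 0 < 2 * r ^ 3 * eps)
    by (apply Rmult_lt_0_compat; [apply Rmult_lt_0_compat, pow_lt |]; lra).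
  exists (mkposreal _ Hdelta); intros v Hv.
  change (Cmod (v - w)%C < 2 * r ^ 3 * eps) in Hv.
  change (Cmod (Csqrt v - Csqrt w - (v - w) * / (2 * Csqrt w))%C <= eps * Cmod (v - w)%C).
  eapply Rle_trans; [apply Csqrt_linear_approx; exact Hr |]; fold r.
  pose proof (Cmod_ge_0 (v - w)%C).
  replace (Cmod (v - w)%C ^ 2 / (2 * r ^ 3))
    with (Cmod (v - w)%C / (2 * r ^ 3) * Cmod (v - w)%C) by (field; lra).
  apply Rmult_le_compat_r; [lra |].
  apply Rle_div_l; [apply Rmult_lt_0_compat, pow_lt |]; lra.
Qed.

Lemma poch_S_l (l : C) (k : nat) : poch l (S k) = (l * poch (l + 1) k)%C.
Proof.
  induction k as [|k IH].
  - simpl; ring.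
  - change (poch l (S (S k))) with (poch l (S k) * (l + INR (S k)))%C.
    rewrite IH, S_INR, RtoC_plus; simpl; ring.
Qed.

Lemma poch_neq0 (l : C) (k : nat) : 0 < Re l -> poch l k <> 0%C.
Proof.
  intros Hl; induction k as [|k IH]; simpl.
  - apply RtoC_neq0; lra.
  - apply Cmult_neq_0; [exact IH |].
    intros E; apply (f_equal Re) in E; destruct l; simpl in *; pose proof (pos_INR k); lra.
Qed.

Definition jacobi_coef (alpha beta : C) (n k : nat) : C :=
  (poch (1 + alpha) n * poch (1 + alpha + beta + INR n) k
   / (INR (fact k) * INR (fact (n - k)) * poch (1 + alpha) k))%C.

Lemma jacobi2_Cpoly (alpha beta : C) (n : nat) (z w : C) :
  jacobi2 alpha beta n z w = Cpoly (jacobi_coef alpha beta n) n ((z - Csqrt w) / 2)%C.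
Proof. reflexivity. Qed.

Lemma jacobi_coef_deriv (alpha beta : C) (n k : nat) : -1 < Re alpha ->
  (INR (S k) * jacobi_coef alpha beta (S n) (S k))%C
  = ((1 + alpha + beta + INR (S n)) * jacobi_coef (1 + alpha) (1 + beta) n k)%C.
Proof.
  intros Ha; unfold jacobi_coef; simpl (S n - S k)%nat.
  rewrite !poch_S_l, fact_simpl, mult_INR, RtoC_mult.
  replace (1 + alpha + 1)%C with (1 + (1 + alpha))%C by ring.
  replace (1 + alpha + beta + INR (S n) + 1)%C with (1 + (1 + alpha) + (1 + beta) + INR n)%C
    by (rewrite !S_INR, !RtoC_plus; ring).
  assert (N1 : (1 + alpha)%C <> 0%C)
    by (intros E; apply (f_equal Re) in E; destruct alpha; simpl in *; lra).
  assert (N2 : poch (1 + (1 + alpha)) k <> 0%C)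
    by (apply poch_neq0; destruct alpha; simpl in *; lra).
  assert (N3 : RtoC (INR (S k)) <> 0%C) by (apply RtoC_neq0, not_0_INR; discriminate).
  assert (N4 : RtoC (INR (fact k)) <> 0%C) by (apply RtoC_neq0, INR_fact_neq_0).
  assert (N5 : RtoC (INR (fact (n - k))) <> 0%C) by (apply RtoC_neq0, INR_fact_neq_0).
  field; repeat split; assumption.
Qed.

Lemma is_derive_jacobi_Cpoly (alpha beta : C) (n : nat) (u : C) : -1 < Re alpha ->
  is_derive (Cpoly (jacobi_coef alpha beta (S n)) (S n)) u
    ((1 + alpha + beta + INR (S n)) * Cpoly (jacobi_coef (1 + alpha) (1 + beta) n) n u)%C.
Proof.
  intros Ha; eapply is_derive_eq; [apply is_derive_Cpoly |].
  rewrite <- Cpoly_scal; apply Cpoly_ext; intros k; apply jacobi_coef_deriv, Ha.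
Qed.

Theorem mainTheorem1 (alpha beta : C) (n : nat) (z w : C) :
  (-1 < Re alpha)%R -> (-1 < Re beta)%R -> (1 <= n)%nat ->
  (Cmod z < 1)%R -> (Cmod w < 1)%R ->
  ~ (Im w = 0 /\ (-1 < Re w <= 0)%R) ->
  exists dz dw : C,
    is_derive (fun z' : C => jacobi2 alpha beta n z' w) z dz /\
    is_derive (fun w' : C => jacobi2 alpha beta n z w') w dw /\
    (dz + Csqrt w * dw
      - (1 + alpha + beta + RtoC (INR n)) / 4
        * jacobi2 (1 + alpha) (1 + beta) (n - 1) z w = 0)%C.
Proof.
  intros Ha _ Hn _ Hw Hcut.
  destruct n as [|m]; [lia |]; rewrite Nat.sub_succ, Nat.sub_0_r.
  assert (Hr : 0 < Re (Csqrt w)).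
  { apply Csqrt_re_pos; intros [Him Hre]; apply Hcut; repeat split; try assumption.
    pose proof (re_le_Cmod w) as H; apply Rabs_le_between in H; lra. }
  assert (Hs : Csqrt w <> 0%C) by (intros E; rewrite E in Hr; simpl in Hr; lra).
  set (p := Cpoly (jacobi_coef alpha beta (S m)) (S m)).
  set (dP := ((1 + alpha + beta + INR (S m)) * jacobi2 (1 + alpha) (1 + beta) m z w)%C).
  exists ((1 - 0) / 2 * dP)%C, ((0 - / (2 * Csqrt w)) / 2 * dP)%C; split; [| split].
  - apply (is_derive_ext (fun z' => p ((z' - Csqrt w) / 2))%C); [reflexivity |].
    apply (is_derive_Ccomp p (fun z' => (z' - Csqrt w) / 2)%C).
    + apply is_derive_jacobi_Cpoly, Ha.
    + apply is_derive_half_diff;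
        [apply is_derive_Cid | apply (@is_derive_const _ C_NormedModule)].
  - apply (is_derive_ext (fun w' => p ((z - Csqrt w') / 2))%C); [reflexivity |].
    apply (is_derive_Ccomp p (fun w' => (z - Csqrt w') / 2)%C).
    + apply is_derive_jacobi_Cpoly, Ha.
    + apply is_derive_half_diff;
        [apply (@is_derive_const _ C_NormedModule) | apply is_derive_Csqrt, Hr].
  - unfold dP; field; exact Hs.
Qed.
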